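(* Let $D$ be a $\ast$-SH domain and let $I$ be a proper integral $\ast$-invertible $\ast$-ideal of $D$. Then $I$ is expressible, uniquely up to order, as a $\ast$-product of finitely many mutually $\ast$-comaximal $\ast$-homog ideals.
   Context: $\ast$ is a star operation on the integral domain $D$ of finite character. A $\ast$-ideal is a nonzero fractional ideal $I$ with $I^\ast=I$; of finite type if $I=J^\ast$ for some nonzero finitely generated $J$. A maximal $\ast$-ideal is an integral $\ast$-ideal maximal among proper integral $\ast$-ideals. $I$ is $\ast$-invertible if $(II^{-1})^\ast=D$. Ideals $A,B$ are $\ast$-comaximal if $(A+B)^\ast=D$. A $\ast$-homog ideal is a proper integral $\ast$-ideal $I$ of finite type such that $(A+B)^\ast\neq D$ for every pair $A,B$ of proper integral $\ast$-ideals of finite type containing $I$. $D$ is a $\ast$-SH domain if for every nonzero nonunit $x$, $xD=(I_1\cdots I_n)^\ast$ for finitely many $\ast$-homog ideals $I_i$. *)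

(* An integral domain D is modelled as a subring D of a
   field K such that K is the quotient field of D.  Subsets of K
   (fractional ideals, etc.) are predicates K -> Prop; equality of such
   subsets is extensional equality [seteq]. *)
From mathcomp Require Import all_boot all_order all_algebra.
Set Implicit Arguments. Unset Strict Implicit. Unset Printing Implicit Defensive.
Import GRing.Theory.
Local Open Scope ring_scope.

Section StarDefs.
Variable K : fieldType.
Variable D : K -> Prop.

Definition subset (A B : K -> Prop) := forall x, A x -> B x.
Definition seteq (A B : K -> Prop) := subset A B /\ subset B A.

Definition is_domain_with_qf : Prop :=
  [/\ D 0, D 1,
      (forall a b, D a -> D b -> D (a - b)),
      (forall a b, D a -> D b -> D (a * b)) &
      (forall x : K, exists a b, [/\ D a, D b, b != 0 & x = a / b])].

Definition submodule (I : K -> Prop) : Prop :=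
  [/\ I 0, (forall a b, I a -> I b -> I (a + b)) &
      (forall d a, D d -> I a -> I (d * a))].

Definition frac_ideal (I : K -> Prop) : Prop :=
  [/\ submodule I, (exists x, I x /\ x != 0) &
      (exists d, [/\ D d, d != 0 & forall x, I x -> D (d * x)])].

Definition principal (x : K) : K -> Prop := fun y => exists d, D d /\ y = d * x.
Definition scale (x : K) (I : K -> Prop) : K -> Prop :=
  fun y => exists z, I z /\ y = x * z.

Definition gen (s : seq K) : K -> Prop :=
  fun z => forall S, submodule S -> (forall a, a \in s -> S a) -> S z.
Definition fin_gen (I : K -> Prop) : Prop := exists s : seq K, seteq I (gen s).

Definition iprod (I J : K -> Prop) : K -> Prop :=
  fun z => forall S, submodule S -> (forall a b, I a -> J b -> S (a * b)) -> S z.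
Definition isum (I J : K -> Prop) : K -> Prop :=
  fun z => exists a b, [/\ I a, J b & z = a + b].
Fixpoint iprodn (n : nat) (F : nat -> K -> Prop) : K -> Prop :=
  match n with 0%N => D | m.+1 => iprod (iprodn m F) (F m) end.

Definition inv (I : K -> Prop) : K -> Prop := fun x => forall y, I y -> D (x * y).

Definition is_star_op (star : (K -> Prop) -> (K -> Prop)) : Prop :=
  (forall I, frac_ideal I -> frac_ideal (star I)) /\
  [/\ (forall x, x != 0 -> seteq (star (principal x)) (principal x)),
      (forall x I, x != 0 -> frac_ideal I -> seteq (star (scale x I)) (scale x (star I))),
      (forall I, frac_ideal I -> subset I (star I)),
      (forall I J, frac_ideal I -> frac_ideal J -> subset I J -> subset (star I) (star J)) &
      (forall I, frac_ideal I -> seteq (star (star I)) (star I))].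

Definition finite_character (star : (K -> Prop) -> (K -> Prop)) : Prop :=
  forall I, frac_ideal I ->
    seteq (star I)
          (fun x => exists J, [/\ frac_ideal J, fin_gen J, subset J I & star J x]).

Variable star : (K -> Prop) -> (K -> Prop).

Definition star_ideal (I : K -> Prop) := frac_ideal I /\ seteq (star I) I.
Definition finite_type (I : K -> Prop) :=
  star_ideal I /\ exists J, [/\ frac_ideal J, fin_gen J & seteq I (star J)].
Definition integral (I : K -> Prop) := subset I D.
(* a proper integral ideal: integral and different from D, i.e. 1 not in I *)
Definition proper_integral (I : K -> Prop) := integral I /\ ~ I 1.

Definition star_invertible (I : K -> Prop) := seteq (star (iprod I (inv I))) D.
Definition star_comaximal (A B : K -> Prop) := seteq (star (isum A B)) D.

Definition star_homog (I : K -> Prop) : Prop :=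
  [/\ proper_integral I, star_ideal I, finite_type I &
      forall A B, proper_integral A -> star_ideal A -> finite_type A ->
                  proper_integral B -> star_ideal B -> finite_type B ->
                  subset I A -> subset I B -> ~ star_comaximal A B].

Definition star_SH : Prop :=
  forall x, D x -> x != 0 -> ~ D x^-1 ->
    exists (n : nat) (F : nat -> K -> Prop),
      (forall i, (i < n)%N -> star_homog (F i)) /\
      seteq (principal x) (star (iprodn n F)).

Definition homog_factorization (I : K -> Prop) (n : nat) (F : nat -> K -> Prop) : Prop :=
  [/\ (forall i, (i < n)%N -> star_homog (F i)),
      (forall i j, (i < n)%N -> (j < n)%N -> i <> j -> star_comaximal (F i) (F j)) &
      seteq I (star (iprodn n F))].

End StarDefs.

(* Existence.  Pick [x <> 0] in [I]; the star-SH property gives star-homog [H_1, ..., H_n] with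
   [(H_1 ... H_n)^* = xD <= I], and [I] is of finite type because it is star-invertible and the
   star operation has finite character.  Call [H] and [X] linked when [(H + X)^*] is proper.  By
   the definition of star-homog ideals, two ideals linked to the same [H_k] are linked to each
   other, so the product [P] of the [H_i] linked to [H_k] is star-comaximal with the product [Q]
   of the others, and then [I = (A B)^*] with [A = (I + P)^*] and [B = (I + Q)^*].  Now [A] is
   star-homog (every proper finite-type star-ideal above it is linked to [H_k]) and
   star-comaximal with every factor of [B], which is handled by induction on the number of
   remaining [H_i].
   Uniqueness.  Each factor of one factorization is linked to some factor of the other, and two
   linked factors contain each other; distinct factors of one factorization are comaximal. *)
From Pilot Require Import Defs.
From mathcomp Require Import all_boot all_order all_algebra ring.
From Stdlib Require Import Classical ClassicalEpsilon.
Set Implicit Arguments. Unset Strict Implicit. Unset Printing Implicit Defensive.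
Import GRing.Theory.
Local Open Scope ring_scope.

Section StarSH.
Variable K : fieldType.
Variable D : K -> Prop.
Variable star : (K -> Prop) -> (K -> Prop).
Hypothesis hD : is_domain_with_qf D.
Hypothesis hstar : is_star_op D star.

Local Notation subset := (@Defs.subset K).
Local Notation seteq := (@Defs.seteq K).
Local Notation frac := (frac_ideal D).
Local Notation smod := (submodule D).

Lemma dom0 : D 0. Proof. by case: hD. Qed.
Lemma dom1 : D 1. Proof. by case: hD. Qed.
Lemma domB a b : D a -> D b -> D (a - b). Proof. by case: hD => _ _ h _ _; apply: h. Qed.
Lemma domM a b : D a -> D b -> D (a * b). Proof. by case: hD => _ _ _ h _; apply: h. Qed.
Lemma domN a : D a -> D (- a). Proof. by move=> ha; rewrite -sub0r; apply: domB => //; apply: dom0. Qed.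
Lemma domD a b : D a -> D b -> D (a + b).
Proof. by move=> ha hb; rewrite -(opprK b); apply: domB => //; apply: domN. Qed.

Lemma sub_refl A : subset A A. Proof. by []. Qed.
Lemma sub_trans A B C : subset A B -> subset B C -> subset A C.
Proof. by move=> h1 h2 x /h1 /h2. Qed.
Lemma eqs_refl A : seteq A A. Proof. by split. Qed.
Lemma eqs_sym A B : seteq A B -> seteq B A. Proof. by case. Qed.
Lemma eqs_trans A B C : seteq A B -> seteq B C -> seteq A C.
Proof. by case=> h1 h2 [h3 h4]; split; apply: sub_trans; eauto. Qed.

Lemma submod_D : smod D.
Proof. split; [exact: dom0 | exact: domD | move=> d a; exact: domM]. Qed.

Lemma frac_D : frac D.
Proof.
split; first exact: submod_D.
  by exists 1; split; [exact: dom1 | exact: oner_neq0].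
by exists 1; split; [exact: dom1 | exact: oner_neq0 | move=> x; rewrite mul1r].
Qed.

Lemma submod_eqs I J : smod I -> seteq I J -> smod J.
Proof.
case=> h0 hp hm [s1 s2]; split; first exact: s1.
- by move=> a b /s2 ha /s2 hb; apply: s1; apply: hp.
- by move=> d a hd /s2 ha; apply: s1; apply: hm.
Qed.

Lemma frac_eqs I J : frac I -> seteq I J -> frac J.
Proof.
case=> hs [x [hx hx0]] [d [hd hd0 hb]] [s1 s2]; split.
- exact: submod_eqs hs (conj s1 s2).
- by exists x; split; [exact: s1|].
- by exists d; split => // y /s2; apply: hb.
Qed.

Lemma frac_submod I : frac I -> smod I. Proof. by case. Qed.
Lemma submod0 I : smod I -> I 0. Proof. by case. Qed.
Lemma submodD I a b : smod I -> I a -> I b -> I (a + b).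
Proof. by case=> _ h _; apply: h. Qed.
Lemma submodM I d a : smod I -> D d -> I a -> I (d * a).
Proof. by case=> _ _ h; apply: h. Qed.
Lemma submodMr I d a : smod I -> D d -> I a -> I (a * d).
Proof. by move=> hI hd ha; rewrite mulrC; apply: submodM. Qed.

Lemma star_frac I : frac I -> frac (star I).
Proof. by case: hstar => h _; apply: h. Qed.
Lemma star_ext I : frac I -> subset I (star I).
Proof. by case: hstar => _ [_ _ h _ _]; apply: h. Qed.
Lemma star_mono I J : frac I -> frac J -> subset I J -> subset (star I) (star J).
Proof. by case: hstar => _ [_ _ _ h _]; apply: h. Qed.
Lemma star_idem I : frac I -> seteq (star (star I)) (star I).
Proof. by case: hstar => _ [_ _ _ _ h]; apply: h. Qed.
Lemma star_eqs I J : frac I -> seteq I J -> seteq (star I) (star J).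
Proof.
move=> hI [s1 s2]; have hJ := frac_eqs hI (conj s1 s2).
by split; apply: star_mono.
Qed.
Lemma star_submod I : frac I -> smod (star I).
Proof. by move/star_frac; case. Qed.

Lemma principal1 : seteq (principal D 1) D.
Proof.
split; first by move=> y [d [hd ->]]; rewrite mulr1.
by move=> y hy; exists y; rewrite mulr1.
Qed.

Lemma star_D : seteq (star D) D.
Proof.
apply: eqs_trans (star_eqs frac_D (eqs_sym principal1)) _.
apply: eqs_trans principal1.
by case: hstar => _ [h _ _ _ _]; apply: h; exact: oner_neq0.
Qed.

Lemma star_integral I : frac I -> integral D I -> integral D (star I).
Proof.
move=> hI hi x hx; apply: (proj1 star_D); exact: star_mono hI frac_D hi x hx.
Qed.

Lemma star_star_ideal I : frac I -> star_ideal D star (star I).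
Proof. by move=> h; split; [exact: star_frac | exact: star_idem]. Qed.

Lemma eqs_D_of_1 I : smod I -> integral D I -> I 1 -> seteq I D.
Proof. by move=> hs hi h1; split => // x hx; rewrite -(mulr1 x); apply: submodM. Qed.

Lemma submod_isum I J : smod I -> smod J -> smod (isum I J).
Proof.
move=> hI hJ; split.
- by exists 0, 0; split; [exact: submod0 hI | exact: submod0 hJ | rewrite addr0].
- move=> _ _ [a1 [b1 [ha1 hb1 ->]]] [a2 [b2 [ha2 hb2 ->]]].
  exists (a1 + a2), (b1 + b2); by split; [apply: submodD|apply: submodD|by rewrite addrACA].
- move=> d _ hd [a [b [ha hb ->]]]; exists (d * a), (d * b).
  by split; [apply: submodM|apply: submodM|rewrite mulrDr].
Qed.

Lemma isum_subl I J : J 0 -> subset I (isum I J).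
Proof. by move=> h0 x hx; exists x, 0; split => //; rewrite addr0. Qed.
Lemma isum_subr I J : I 0 -> subset J (isum I J).
Proof. by move=> h0 x hx; exists 0, x; split => //; rewrite add0r. Qed.
Lemma isum_lub I J S : smod S -> subset I S -> subset J S -> subset (isum I J) S.
Proof. by move=> hS h1 h2 _ [a [b [ha hb ->]]]; apply: submodD => //; auto. Qed.
Lemma isum_mono I I' J J' : subset I I' -> subset J J' -> subset (isum I J) (isum I' J').
Proof. by move=> h1 h2 _ [a [b [ha hb ->]]]; exists a, b; split; auto. Qed.
Lemma isumC I J : seteq (isum I J) (isum J I).
Proof. by split=> _ [a [b [ha hb ->]]]; exists b, a; split => //; rewrite addrC. Qed.
Lemma isum_eqs I I' J J' : seteq I I' -> seteq J J' -> seteq (isum I J) (isum I' J').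
Proof. by case=> a1 a2 [b1 b2]; split; apply: isum_mono. Qed.

Lemma frac_isum I J : frac I -> frac J -> frac (isum I J).
Proof.
move=> hI hJ; have [sI [x [hx hx0]] [d1 [hd1 hd10 hb1]]] := hI.
have [sJ _ [d2 [hd2 hd20 hb2]]] := hJ.
split; first exact: submod_isum.
  by exists x; split => //; apply: isum_subl => //; apply: submod0.
exists (d1 * d2); split; [exact: domM | exact: mulf_neq0 |].
move=> _ [a [b [ha hb ->]]].
have -> : d1 * d2 * (a + b) = d2 * (d1 * a) + d1 * (d2 * b) by ring.
by apply: domD => //; apply: domM => //; auto.
Qed.

Lemma integral_isum I J : integral D I -> integral D J -> integral D (isum I J).
Proof. by move=> h1 h2; apply: isum_lub => //; apply: submod_D. Qed.

Lemma iprod_mul I J a b : I a -> J b -> iprod D I J (a * b).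
Proof. by move=> ha hb S hS h; apply: h. Qed.
Lemma submod_iprod I J : smod (iprod D I J).
Proof.
split.
- by move=> S hS _; apply: submod0.
- by move=> a b ha hb S hS h; apply: submodD => //; [apply: ha | apply: hb].
- by move=> d a hd ha S hS h; apply: submodM => //; apply: ha.
Qed.
Lemma iprod_lub I J S : smod S -> (forall a b, I a -> J b -> S (a * b)) -> subset (iprod D I J) S.
Proof. by move=> hS h z hz; apply: hz. Qed.
Lemma submod_mulr S c : smod S -> smod (fun z => S (z * c)).
Proof.
move=> hS; split.
- by rewrite mul0r; apply: submod0.
- by move=> a b ha hb; rewrite mulrDl; apply: submodD.
- by move=> d a hd ha; rewrite -mulrA; apply: submodM.
Qed.
Lemma submod_mull S c : smod S -> smod (fun z => S (c * z)).
Proof.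
move=> hS; split.
- by rewrite mulr0; apply: submod0.
- by move=> a b ha hb; rewrite mulrDr; apply: submodD.
- by move=> d a hd ha; rewrite mulrCA; apply: submodM.
Qed.
Lemma iprod_mono I I' J J' : subset I I' -> subset J J' -> subset (iprod D I J) (iprod D I' J').
Proof.
move=> h1 h2; apply: iprod_lub; first exact: submod_iprod.
by move=> a b ha hb; apply: iprod_mul; auto.
Qed.
Lemma iprod_eqs I I' J J' : seteq I I' -> seteq J J' -> seteq (iprod D I J) (iprod D I' J').
Proof. by case=> a1 a2 [b1 b2]; split; apply: iprod_mono. Qed.
Lemma iprodC I J : seteq (iprod D I J) (iprod D J I).
Proof.
by split; apply: iprod_lub; (try exact: submod_iprod) => a b ha hb;
  rewrite mulrC; apply: iprod_mul.
Qed.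
Lemma iprodA I J L : seteq (iprod D (iprod D I J) L) (iprod D I (iprod D J L)).
Proof.
split.
- apply: iprod_lub; first exact: submod_iprod.
  move=> z c hz hc; apply: (iprod_lub (S := fun z => iprod D I (iprod D J L) (z * c))) hz.
    exact/submod_mulr/submod_iprod.
  by move=> a b ha hb; rewrite -mulrA; apply: iprod_mul => //; apply: iprod_mul.
- apply: iprod_lub; first exact: submod_iprod.
  move=> a w ha hw; apply: (iprod_lub (S := fun w => iprod D (iprod D I J) L (a * w))) hw.
    exact/submod_mull/submod_iprod.
  by move=> b c hb hc; rewrite mulrA; apply: iprod_mul => //; apply: iprod_mul.
Qed.
Lemma iprod_unitr I : smod I -> seteq (iprod D I D) I.
Proof.
move=> hI; split.
- by apply: iprod_lub => // a d ha hd; apply: submodMr.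
- by move=> x hx; rewrite -(mulr1 x); apply: iprod_mul => //; apply: dom1.
Qed.
Lemma iprod_unitl I : smod I -> seteq (iprod D D I) I.
Proof. by move=> hI; apply: eqs_trans (iprodC _ _) (iprod_unitr hI). Qed.
Lemma iprod_sub_l I J : smod I -> integral D J -> subset (iprod D I J) I.
Proof. by move=> hI hJ; apply: iprod_lub => // a b ha hb; apply: submodMr => //; apply: hJ. Qed.
Lemma iprod_sub_r I J : integral D I -> smod J -> subset (iprod D I J) J.
Proof. by move=> hI hJ; apply: iprod_lub => // a b ha hb; apply: submodM => //; apply: hI. Qed.
Lemma integral_iprod I J : integral D I -> integral D J -> integral D (iprod D I J).
Proof.
move=> h1 h2; apply: iprod_lub; first exact: submod_D.
by move=> a b ha hb; apply: domM; auto.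
Qed.
Lemma frac_iprod I J : frac I -> frac J -> frac (iprod D I J).
Proof.
move=> hI hJ; have [sI [x [hx hx0]] [d1 [hd1 hd10 hb1]]] := hI.
have [sJ [y [hy hy0]] [d2 [hd2 hd20 hb2]]] := hJ.
split; first exact: submod_iprod.
  by exists (x * y); split; [apply: iprod_mul | exact: mulf_neq0].
exists (d1 * d2); split; [exact: domM | exact: mulf_neq0 |].
apply: iprod_lub; first exact: submod_mull submod_D.
by move=> a b ha hb; rewrite mulrACA; apply: domM; auto.
Qed.

Lemma iprod_isumr_sub X Y Z :
  subset (iprod D X (isum Y Z)) (isum (iprod D X Y) (iprod D X Z)).
Proof.
apply: iprod_lub; first by apply: submod_isum; apply: submod_iprod.
move=> a _ ha [y [z [hy hz ->]]]; exists (a * y), (a * z).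
by split; [apply: iprod_mul | apply: iprod_mul | rewrite mulrDr].
Qed.

Lemma iprod_isum_sub I P Q : smod I -> smod P -> smod Q ->
  subset (iprod D I (isum P Q)) (iprod D (isum I P) (isum I Q)).
Proof.
move=> hI hP hQ; apply: iprod_lub; first exact: submod_iprod.
move=> a _ ha [p [q [hp hq ->]]].
have -> : a * (p + q) = p * a + a * q by ring.
apply: (@submodD (iprod D (isum I P) (isum I Q))); first exact: submod_iprod.
- by apply: iprod_mul; [apply: isum_subr; first apply: submod0 | apply: isum_subl; first apply: submod0].
- by apply: iprod_mul; [apply: isum_subl; first apply: submod0 | apply: isum_subr; first apply: submod0].
Qed.

Lemma iprod_isum_isum_sub I P Q : smod I -> integral D I -> integral D P -> integral D Q ->
  subset (iprod D (isum I P) (isum I Q)) (isum I (iprod D P Q)).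
Proof.
move=> hI hIi hP hQ; apply: iprod_lub; first exact/submod_isum/submod_iprod.
move=> _ _ [a [p [ha hp ->]]] [b [q [hb hq ->]]].
exists (a * (b + q) + p * b), (p * q); split.
- apply: submodD => //; first by apply: submodMr => //; apply: domD; auto.
  by apply: submodM => //; auto.
- exact: iprod_mul.
- by ring.
Qed.

Lemma frac_scale x I : x != 0 -> frac I -> frac (scale x I).
Proof.
move=> hx0 [sI [y [hy hy0]] [d [hd hd0 hb]]]; split.
- split.
  + by exists 0; split; [apply: submod0 | rewrite mulr0].
  + move=> _ _ [z1 [h1 ->]] [z2 [h2 ->]]; exists (z1 + z2).
    by split; [apply: submodD | rewrite mulrDr].
  + move=> e _ he [z [hz ->]]; exists (e * z); by split; [apply: submodM | rewrite mulrCA].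
- exists (x * y); split; [exists y; by split | exact: mulf_neq0].
- case: hD => _ _ _ _ hq; have [a [b [ha hbb hb0 hx]]] := hq x.
  exists (b * d); split; [exact: domM | exact: mulf_neq0 |].
  move=> _ [z [hz ->]].
  have -> : b * d * (x * z) = (b * x) * (d * z) by ring.
  have -> : b * x = a by rewrite hx mulrC divfK.
  by apply: domM; auto.
Qed.

Lemma star_iprod_starr X Y : frac X -> frac Y ->
  seteq (star (iprod D X (star Y))) (star (iprod D X Y)).
Proof.
move=> hX hY.
have hXY := frac_iprod hX hY.
have hXsY := frac_iprod hX (star_frac hY).
split; last first.
  by apply: (star_mono hXY hXsY); apply: iprod_mono; [exact: sub_refl | exact: star_ext].
suff h : subset (iprod D X (star Y)) (star (iprod D X Y)).
  move=> z hz; apply: (proj1 (star_idem hXY)).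
  by apply: (star_mono hXsY (star_frac hXY) h).
apply: iprod_lub; first exact: star_submod.
move=> a b ha hb; have [->|ha0] := eqVneq a 0.
  by rewrite mul0r; apply: submod0; apply: star_submod.
have hs : scale a (star Y) (a * b) by exists b.
case: hstar => _ [_ hsc _ _ _].
have := proj2 (hsc a Y ha0 hY) _ hs.
apply: (star_mono (frac_scale ha0 hY) hXY).
by move=> _ [y [hy ->]]; apply: iprod_mul.
Qed.

Lemma star_iprod_starl X Y : frac X -> frac Y ->
  seteq (star (iprod D (star X) Y)) (star (iprod D X Y)).
Proof.
move=> hX hY.
apply: eqs_trans (star_eqs (frac_iprod (star_frac hX) hY) (iprodC _ _)) _.
apply: eqs_trans (star_iprod_starr hY hX) _.
exact (star_eqs (frac_iprod hY hX) (iprodC _ _)).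
Qed.

Lemma star_isum_starr X Y : frac X -> frac Y ->
  seteq (star (isum X (star Y))) (star (isum X Y)).
Proof.
move=> hX hY.
have hXY := frac_isum hX hY.
have hXsY := frac_isum hX (star_frac hY).
split; last first.
  by apply: (star_mono hXY hXsY); apply: isum_mono; [exact: sub_refl | exact: star_ext].
suff h : subset (isum X (star Y)) (star (isum X Y)).
  move=> z hz; apply: (proj1 (star_idem hXY)).
  by apply: (star_mono hXsY (star_frac hXY) h).
apply: isum_lub; first exact: star_submod.
- apply: sub_trans (star_ext hXY); apply: isum_subl; apply: submod0; by case: hY.
- apply: (star_mono hY hXY); apply: isum_subr; apply: submod0; by case: hX.
Qed.

Lemma star_isum_starl X Y : frac X -> frac Y ->
  seteq (star (isum (star X) Y)) (star (isum X Y)).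
Proof.
move=> hX hY.
apply: eqs_trans (star_eqs (frac_isum (star_frac hX) hY) (isumC _ _)) _.
apply: eqs_trans (star_isum_starr hY hX) _.
exact (star_eqs (frac_isum hY hX) (isumC _ _)).
Qed.

Lemma submod_gen s : smod (gen D s).
Proof.
split.
- by move=> S hS _; apply: submod0.
- by move=> a b ha hb S hS h; apply: submodD => //; [apply: ha | apply: hb].
- by move=> d a hd ha S hS h; apply: submodM => //; apply: ha.
Qed.
Lemma gen_in s a : a \in s -> gen D s a.
Proof. by move=> ha S hS h; apply: h. Qed.
Lemma gen_lub s S : smod S -> (forall a, a \in s -> S a) -> subset (gen D s) S.
Proof. by move=> hS h z hz; apply: hz. Qed.

Lemma gen_cat s t : seteq (gen D (s ++ t)) (isum (gen D s) (gen D t)).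
Proof.
split.
- apply: gen_lub; first by apply: submod_isum; apply: submod_gen.
  move=> a; rewrite mem_cat => /orP [] ha.
  + by apply: isum_subl; [apply: submod0; apply: submod_gen | apply: gen_in].
  + by apply: isum_subr; [apply: submod0; apply: submod_gen | apply: gen_in].
- apply: isum_lub; first exact: submod_gen.
  + by apply: gen_lub; first exact: submod_gen; move=> a ha; apply: gen_in; rewrite mem_cat ha.
  + by apply: gen_lub; first exact: submod_gen; move=> a ha; apply: gen_in; rewrite mem_cat ha orbT.
Qed.

Lemma gen_allpairs s t :
  seteq (gen D [seq a * b | a <- s, b <- t]) (iprod D (gen D s) (gen D t)).
Proof.
set G := gen D _.
split.
- apply: gen_lub; first exact: submod_iprod.
  move=> z /allpairsP [[a b] [/= ha hb ->]].
  by apply: iprod_mul; apply: gen_in.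
- apply: iprod_lub; first exact: submod_gen.
  have h1 : forall a, a \in s -> subset (gen D t) (fun b => G (a * b)).
    move=> a ha; apply: gen_lub; first by apply: submod_mull; apply: submod_gen.
    by move=> b hb; apply: gen_in; apply/allpairsP; exists (a, b).
  have h2 : subset (gen D s) (fun a => forall b, gen D t b -> G (a * b)).
    apply: gen_lub; last by move=> a ha b hb; apply: h1.
    split.
    + by move=> b _; rewrite mul0r; apply: submod0; apply: submod_gen.
    + by move=> a1 a2 h3 h4 b hb; rewrite mulrDl; apply: (@submodD G); [apply: submod_gen|auto|auto].
    + by move=> d a hd ha b hb; rewrite -mulrA; apply: (@submodM G); [apply: submod_gen|done|auto].
  by move=> a b ha hb; apply: h2.
Qed.

Lemma common_denominator (s : seq K) : exists d, [/\ D d, d != 0 & forall a, a \in s -> D (d * a)].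
Proof.
elim: s => [|a s [d [hd hd0 hs]]].
  by exists 1; split => //; [exact: dom1 | exact: oner_neq0].
case: hD => _ _ _ _ hq; have [c [b [hc hb hb0 ha]]] := hq a.
exists (b * d); split; [exact: domM | exact: mulf_neq0 |].
move=> x; rewrite inE => /orP [/eqP -> | hx].
  have -> : b * d * a = d * (b * a) by ring.
  have -> : b * a = c by rewrite ha mulrC divfK.
  exact: domM.
by rewrite -mulrA; apply: domM => //; apply: hs.
Qed.

Lemma frac_gen s a : a \in s -> a != 0 -> frac (gen D s).
Proof.
move=> ha ha0; split; first exact: submod_gen.
  by exists a; split => //; apply: gen_in.
have [d [hd hd0 hs]] := common_denominator s.
by exists d; split => //; apply: gen_lub => //; exact: submod_mull submod_D.
Qed.

Lemma gen_one : seteq (gen D [:: 1]) D.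
Proof.
split.
- by apply: gen_lub; [exact: submod_D | move=> a; rewrite inE => /eqP ->; exact: dom1].
- move=> x hx; rewrite -(mulr1 x); apply: (@submodM (gen D [:: 1])) => //; first exact: submod_gen.
  by apply: gen_in; rewrite inE.
Qed.

Lemma star_iprod_star X Y : frac X -> frac Y ->
  seteq (star (iprod D (star X) (star Y))) (star (iprod D X Y)).
Proof.
move=> hX hY; apply: eqs_trans (star_iprod_starl hX hY).
exact: star_iprod_starr (star_frac hX) hY.
Qed.
Lemma star_isum_star X Y : frac X -> frac Y ->
  seteq (star (isum (star X) (star Y))) (star (isum X Y)).
Proof.
move=> hX hY; apply: eqs_trans (star_isum_starl hX hY).
exact: star_isum_starr (star_frac hX) hY.
Qed.

Lemma star_iprod_congr X X' Y Y' : frac X -> frac Y -> frac X' -> frac Y' ->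
  seteq (star X) (star X') -> seteq (star Y) (star Y') ->
  seteq (star (iprod D X Y)) (star (iprod D X' Y')).
Proof.
move=> hX hY hX' hY' e1 e2.
apply: eqs_trans (eqs_sym (star_iprod_star hX hY)) _.
apply: eqs_trans (star_iprod_star hX' hY').
apply: star_eqs; first by apply: frac_iprod; apply: star_frac.
exact: iprod_eqs.
Qed.
Lemma star_isum_congr X X' Y Y' : frac X -> frac Y -> frac X' -> frac Y' ->
  seteq (star X) (star X') -> seteq (star Y) (star Y') ->
  seteq (star (isum X Y)) (star (isum X' Y')).
Proof.
move=> hX hY hX' hY' e1 e2.
apply: eqs_trans (eqs_sym (star_isum_star hX hY)) _.
apply: eqs_trans (star_isum_star hX' hY').
apply: star_eqs; first by apply: frac_isum; apply: star_frac.
exact: isum_eqs.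
Qed.

Definition star_fg X := exists s, frac (gen D s) /\ seteq (star X) (star (gen D s)).

Lemma star_fg_eqs X Y : frac X -> seteq X Y -> star_fg X -> star_fg Y.
Proof.
move=> hX e [s [hs e2]]; exists s; split => //.
exact: eqs_trans (eqs_sym (star_eqs hX e)) e2.
Qed.

Lemma star_fg_isum X Y : frac X -> frac Y -> star_fg X -> star_fg Y -> star_fg (isum X Y).
Proof.
move=> hX hY [s [hs e1]] [t [ht e2]].
have hst : frac (isum (gen D s) (gen D t)) by apply: frac_isum.
exists (s ++ t); split; first exact: frac_eqs hst (eqs_sym (gen_cat s t)).
apply: eqs_trans (star_isum_congr hX hY hs ht e1 e2) _.
exact: star_eqs hst (eqs_sym (gen_cat s t)).
Qed.

Lemma star_fg_iprod X Y : frac X -> frac Y -> star_fg X -> star_fg Y -> star_fg (iprod D X Y).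
Proof.
move=> hX hY [s [hs e1]] [t [ht e2]].
have hst : frac (iprod D (gen D s) (gen D t)) by apply: frac_iprod.
exists [seq a * b | a <- s, b <- t]; split; first exact: frac_eqs hst (eqs_sym (gen_allpairs s t)).
apply: eqs_trans (star_iprod_congr hX hY hs ht e1 e2) _.
exact: star_eqs hst (eqs_sym (gen_allpairs s t)).
Qed.

Lemma star_fg_D : star_fg D.
Proof.
exists [:: 1]; split; first exact: frac_eqs frac_D (eqs_sym gen_one).
exact: star_eqs frac_D (eqs_sym gen_one).
Qed.

Lemma star_fg_finite_type I : finite_type D star I -> star_fg I.
Proof.
case=> [[hI eI] [J [hJ [s es] eJ]]].
exists s; split; first exact: frac_eqs hJ es.
apply: eqs_trans eI (eqs_trans eJ _).
exact: star_eqs hJ es.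
Qed.

Lemma finite_type_star X : frac X -> star_fg X -> finite_type D star (star X).
Proof.
move=> hX [s [hs e]]; split; first exact: star_star_ideal.
by exists (gen D s); split => //; exists s; exact: eqs_refl.
Qed.

Lemma comaxP A B : frac A -> frac B -> integral D A -> integral D B ->
  star_comaximal D star A B <-> star (isum A B) 1.
Proof.
move=> hA hB iA iB; have hAB := frac_isum hA hB.
split; first by case=> _ h; apply: h; exact: dom1.
move=> h1; apply: eqs_D_of_1 => //; first exact: star_submod.
apply: star_integral => //; exact: integral_isum iA iB.
Qed.

Lemma comaxC A B : frac A -> frac B ->
  star_comaximal D star A B -> star_comaximal D star B A.
Proof.
move=> hA hB h; apply: eqs_trans h.
exact: star_eqs (frac_isum hB hA) (isumC _ _).
Qed.

Lemma comax_D A : frac A -> integral D A -> star_comaximal D star A D.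
Proof.
move=> hA iA; apply/(comaxP hA frac_D iA (@sub_refl D)).
apply: star_ext; first exact: frac_isum hA frac_D.
by apply: isum_subr; [apply: submod0; case: hA | exact: dom1].
Qed.

Lemma comax_iprod A X Y : frac A -> frac X -> frac Y ->
  integral D A -> integral D X -> integral D Y ->
  star_comaximal D star A X -> star_comaximal D star A Y ->
  star_comaximal D star A (iprod D X Y).
Proof.
move=> hA hX hY iA iX iY c1 c2.
have hXY := frac_iprod hX hY.
apply/comaxP => //; first exact: integral_iprod.
have hAX := frac_isum hA hX; have hAY := frac_isum hA hY.
have hP := frac_iprod hAX hAY.
have h1 : star (iprod D (isum A X) (isum A Y)) 1.
  apply: (proj1 (star_iprod_star hAX hAY)).
  apply: (proj2 (star_eqs (frac_iprod (star_frac hAX) (star_frac hAY))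
            (iprod_eqs c1 c2))).
  apply: star_ext; first exact: frac_iprod frac_D frac_D.
  by rewrite -(mulr1 1); apply: iprod_mul; exact: dom1.
move: h1; apply: star_mono => //; first exact: frac_isum.
by apply: iprod_isum_isum_sub => //; case: hA.
Qed.

Lemma frac_iprodn n F : (forall i, (i < n)%N -> frac (F i)) -> frac (iprodn D n F).
Proof.
elim: n => [|n IH] h /=; first exact: frac_D.
by apply: frac_iprod; [apply: IH => i hi; apply: h; apply: ltnW | apply: h].
Qed.
Lemma integral_iprodn n F : (forall i, (i < n)%N -> integral D (F i)) ->
  integral D (iprodn D n F).
Proof.
elim: n => [|n IH] h /=; first exact: sub_refl.
by apply: integral_iprod; [apply: IH => i hi; apply: h; apply: ltnW | apply: h].
Qed.
Lemma submod_iprodn n F : smod (iprodn D n F).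
Proof. by case: n => [|n] /=; [exact: submod_D | exact: submod_iprod]. Qed.
Lemma iprodn_eqs n F G : (forall i, (i < n)%N -> seteq (F i) (G i)) ->
  seteq (iprodn D n F) (iprodn D n G).
Proof.
elim: n => [|n IH] h /=; first exact: eqs_refl.
by apply: iprod_eqs; [apply: IH => i hi; apply: h; apply: ltnW | apply: h].
Qed.
Lemma star_fg_iprodn n F : (forall i, (i < n)%N -> frac (F i) /\ star_fg (F i)) ->
  star_fg (iprodn D n F).
Proof.
elim: n => [|n IH] h /=; first exact: star_fg_D.
have hF : forall i, (i < n)%N -> frac (F i) by move=> i hi; case: (h i (ltnW hi)).
have [fn tn] := h n (ltnSn n).
apply: star_fg_iprod => //; first exact: frac_iprodn.
by apply: IH => i hi; apply: h; apply: ltnW.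
Qed.
Lemma iprodn_sub n F j : (forall i, (i < n)%N -> smod (F i) /\ integral D (F i)) ->
  (j < n)%N -> subset (iprodn D n F) (F j).
Proof.
elim: n => [|n IH] h hj //=.
have hi : forall i, (i < n)%N -> integral D (F i) by move=> i hi; case: (h i (ltnW hi)).
rewrite ltnS leq_eqVlt in hj; case/orP: hj => [/eqP -> | hj].
  by apply: iprod_sub_r; [exact: integral_iprodn | case: (h n (ltnSn n))].
apply: sub_trans (IH _ hj); last by move=> i hi'; apply: h; apply: ltnW.
by apply: iprod_sub_l; [exact: submod_iprodn | case: (h n (ltnSn n))].
Qed.
Lemma iprodn_trivial n F : (forall i, (i < n)%N -> seteq (F i) D) -> seteq (iprodn D n F) D.
Proof.
elim: n => [|n IH] h /=; first exact: eqs_refl.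
apply: eqs_trans (iprod_eqs (IH _) (h n (ltnSn n))) _.
  by move=> i hi; apply: h; apply: ltnW.
exact: iprod_unitr submod_D.
Qed.

Lemma iprodACA A B C E :
  seteq (iprod D (iprod D A B) (iprod D C E)) (iprod D (iprod D A C) (iprod D B E)).
Proof.
apply: eqs_trans (iprodA _ _ _) _.
apply: eqs_trans (iprod_eqs (eqs_refl A) (eqs_sym (iprodA _ _ _))) _.
apply: eqs_trans (iprod_eqs (eqs_refl A) (iprod_eqs (iprodC _ _) (eqs_refl E))) _.
apply: eqs_trans (iprod_eqs (eqs_refl A) (iprodA _ _ _)) _.
exact: eqs_sym (iprodA _ _ _).
Qed.

Lemma iprodn_iprod n F G :
  seteq (iprodn D n (fun i => iprod D (F i) (G i))) (iprod D (iprodn D n F) (iprodn D n G)).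
Proof.
elim: n => [|n IH] /=; first exact: eqs_sym (iprod_unitr submod_D).
apply: eqs_trans (iprod_eqs IH (eqs_refl _)) _.
exact: iprodACA.
Qed.

Lemma comax_iprodn A n F : frac A -> integral D A ->
  (forall i, (i < n)%N -> [/\ frac (F i), integral D (F i) & star_comaximal D star A (F i)]) ->
  star_comaximal D star A (iprodn D n F).
Proof.
move=> hA iA; elim: n => [|n IH] h /=; first exact: comax_D.
have hF : forall i, (i < n)%N -> frac (F i) by move=> i hi; case: (h i (ltnW hi)).
have iF : forall i, (i < n)%N -> integral D (F i) by move=> i hi; case: (h i (ltnW hi)).
have [f1 i1 c1] := h n (ltnSn n).
apply: comax_iprod => //; [exact: frac_iprodn | exact: integral_iprodn |].
by apply: IH => i hi; apply: h; apply: ltnW.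
Qed.

Lemma star_fg_star X : frac X -> star_fg X -> star_fg (star X).
Proof. by move=> hX [s [hs e]]; exists s; split => //; exact: eqs_trans (star_idem hX) e. Qed.

Lemma comax_eqs A B A' B' : frac A -> frac B -> seteq A A' -> seteq B B' ->
  star_comaximal D star A B -> star_comaximal D star A' B'.
Proof.
move=> hA hB e1 e2 h; apply: eqs_trans h.
exact: eqs_sym (star_eqs (frac_isum hA hB) (isum_eqs e1 e2)).
Qed.

Lemma comax_sup P Q A B : frac P -> frac Q -> frac A -> frac B ->
  integral D A -> integral D B -> subset P A -> subset Q B ->
  star_comaximal D star P Q -> star_comaximal D star A B.
Proof.
move=> fP fQ fA fB iA iB PA QB c; apply/(comaxP fA fB iA iB).
apply: (star_mono (frac_isum fP fQ) (frac_isum fA fB) (isum_mono PA QB)).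
exact: (proj2 c _ dom1).
Qed.

Lemma comax_sub_unit A B : star_ideal D star A -> frac B ->
  subset B A -> star_comaximal D star A B -> A 1.
Proof.
move=> [fA eA] fB BA c; apply: (proj1 eA).
apply: (star_mono (frac_isum fA fB) fA); last exact: (proj2 c _ dom1).
by apply: isum_lub; [exact: frac_submod | exact: sub_refl | exact: BA].
Qed.

Definition mask (p : nat -> Prop) (H : nat -> K -> Prop) (i : nat) : K -> Prop :=
  fun x => (p i /\ H i x) \/ (~ p i /\ D x).

Lemma mask_on p H i : p i -> seteq (mask p H i) (H i).
Proof.
move=> hp; split; first by move=> x [[_ h] | [h _]].
by move=> x hx; left.
Qed.

Lemma mask_off p H i : ~ p i -> seteq (mask p H i) D.
Proof.
move=> hp; split; first by move=> x [[h _] | [_ h]].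
by move=> x hx; right.
Qed.

Lemma frac_mask p H i : (p i -> frac (H i)) -> frac (mask p H i).
Proof.
move=> h; have [hp|hp] := classic (p i).
  exact: frac_eqs (h hp) (eqs_sym (mask_on _ hp)).
exact: frac_eqs frac_D (eqs_sym (mask_off _ hp)).
Qed.

Lemma integral_mask p H i : (p i -> integral D (H i)) -> integral D (mask p H i).
Proof. by move=> h x [[hp hx] | [_ hx]] //; apply: h. Qed.

Lemma star_fg_mask p H i : (p i -> frac (H i) /\ star_fg (H i)) -> star_fg (mask p H i).
Proof.
move=> h; have [hp|hp] := classic (p i).
  by case: (h hp) => f t; exact: star_fg_eqs f (eqs_sym (mask_on _ hp)) t.
exact: star_fg_eqs frac_D (eqs_sym (mask_off _ hp)) star_fg_D.
Qed.

Lemma mask_split p p1 p2 H i : (p i -> smod (H i)) ->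
  (p i <-> p1 i \/ p2 i) -> ~ (p1 i /\ p2 i) ->
  seteq (mask p H i) (iprod D (mask p1 H i) (mask p2 H i)).
Proof.
move=> hH e ex.
have [h1|h1] := classic (p1 i).
  have hp : p i by apply/e; left.
  have h2 : ~ p2 i by move=> h2; apply: ex.
  apply: eqs_trans (mask_on _ hp) _.
  apply: eqs_trans (eqs_sym (iprod_unitr (hH hp))) _.
  by apply: iprod_eqs; apply: eqs_sym; [exact: mask_on | exact: mask_off].
have [h2|h2] := classic (p2 i).
  have hp : p i by apply/e; right.
  apply: eqs_trans (mask_on _ hp) _.
  apply: eqs_trans (eqs_sym (iprod_unitl (hH hp))) _.
  by apply: iprod_eqs; apply: eqs_sym; [exact: mask_off | exact: mask_on].
have hp : ~ p i by move/e => [].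
apply: eqs_trans (mask_off _ hp) _.
apply: eqs_trans (eqs_sym (iprod_unitr submod_D)) _.
by apply: iprod_eqs; apply: eqs_sym; exact: mask_off.
Qed.

Lemma iprodn_mask_split n p p1 p2 H : (forall i, (i < n)%N -> p i -> smod (H i)) ->
  (forall i, p i <-> p1 i \/ p2 i) -> (forall i, ~ (p1 i /\ p2 i)) ->
  seteq (iprodn D n (mask p H))
        (iprod D (iprodn D n (mask p1 H)) (iprodn D n (mask p2 H))).
Proof.
move=> hH e ex; apply: eqs_trans (iprodn_iprod n (mask p1 H) (mask p2 H)).
by apply: iprodn_eqs => i hi; apply: mask_split; auto.
Qed.

Lemma iprodn_mask_true n H : seteq (iprodn D n H) (iprodn D n (mask (fun _ => True) H)).
Proof. by apply: iprodn_eqs => i _; apply: eqs_sym; apply: mask_on. Qed.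

Lemma iprodn_mask_single n F i : (i < n)%N -> smod (F i) ->
  seteq (iprodn D n (mask (fun k => k = i) F)) (F i).
Proof.
move=> hi hF; elim: n hi => [|n IH] //= hi.
rewrite ltnS leq_eqVlt in hi; case/orP: hi => [/eqP e | hi].
  subst i.
  have e1 : seteq (iprodn D n (mask (fun k => k = n) F)) D.
    by apply: iprodn_trivial => k hk; apply: mask_off => e'; rewrite e' ltnn in hk.
  apply: eqs_trans (iprod_eqs e1 (mask_on _ (erefl n))) _.
  exact: iprod_unitl.
have e2 : seteq (mask (fun k => k = i) F n) D.
  by apply: mask_off => e; rewrite e ltnn in hi.
apply: eqs_trans (iprod_eqs (IH hi) e2) _.
exact: iprod_unitr.
Qed.

Lemma iprodn_factor_out m G j : (j < m)%N -> (forall i, (i < m)%N -> smod (G i)) ->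
  seteq (iprodn D m G) (iprod D (G j) (iprodn D m (mask (fun l => l <> j) G))).
Proof.
move=> hj hG; apply: eqs_trans (iprodn_mask_true m G) _.
apply: eqs_trans (iprodn_mask_split (p1 := fun l => l = j) (p2 := fun l => l <> j)
                    (fun i hi _ => hG i hi) _ _) _.
- by move=> i; split => // _; apply: classic.
- by move=> i [].
apply: iprod_eqs; last exact: eqs_refl.
exact: iprodn_mask_single (hG j hj).
Qed.

Section HomogIdeal.
Variable H : K -> Prop.
Hypothesis hH : star_homog D star H.

Lemma homog_star_ideal : star_ideal D star H. Proof. by case: hH. Qed.
Lemma homog_frac : frac H. Proof. by case: homog_star_ideal. Qed.
Lemma homog_integral : integral D H. Proof. by case: hH => [[]]. Qed.
Lemma homog_not1 : ~ H 1. Proof. by case: hH => [[]]. Qed.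
Lemma homog_star : seteq (star H) H. Proof. by case: homog_star_ideal. Qed.
Lemma homog_fg : star_fg H. Proof. by case: hH => _ _ h _; exact: star_fg_finite_type. Qed.
Lemma homog_submod : smod H. Proof. by case: homog_frac. Qed.

Lemma homog_not_comax_sub B : frac B -> subset B H -> ~ star_comaximal D star H B.
Proof.
move=> fB BH c; apply: homog_not1.
exact: comax_sub_unit homog_star_ideal fB BH c.
Qed.

End HomogIdeal.

(* Failure of star-comaximality, stated without the side conditions of [comaxP]. *)
Definition linked H X := ~ star (isum H X) 1.

Lemma linkedC X Y : frac X -> frac Y -> linked X Y -> linked Y X.
Proof.
move=> hX hY h1 h2; apply: h1.
exact: (proj1 (star_eqs (frac_isum hY hX) (isumC _ _))).
Qed.

Lemma linked_refl H : star_homog D star H -> linked H H.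
Proof.
move=> hH h; apply: (homog_not_comax_sub hH (homog_frac hH) (@sub_refl H)).
exact/(comaxP (homog_frac hH) (homog_frac hH) (homog_integral hH) (homog_integral hH)).
Qed.

Lemma comax_of_not_linked A B : frac A -> frac B -> integral D A -> integral D B ->
  ~ linked A B -> star_comaximal D star A B.
Proof. by move=> hA hB iA iB h; apply/comaxP => //; apply: NNPP. Qed.

(* The defining property of star-homog ideals: (H + X)^* and (H + Y)^* contain H,
   so they cannot be star-comaximal. *)
Lemma linked_trans H X Y : star_homog D star H -> frac X -> frac Y ->
  integral D X -> integral D Y -> star_fg X -> star_fg Y ->
  linked H X -> linked H Y -> linked X Y.
Proof.
move=> hH hX hY iX iY tX tY rX rY hXY.
have fH := homog_frac hH; have iH := homog_integral hH.
have fHX := frac_isum fH hX; have fHY := frac_isum fH hY.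
have pA : proper_integral D (star (isum H X)).
  by split => //; apply: star_integral => //; exact: integral_isum iH iX.
have pB : proper_integral D (star (isum H Y)).
  by split => //; apply: star_integral => //; exact: integral_isum iH iY.
have tA := finite_type_star fHX (star_fg_isum fH hX (homog_fg hH) tX).
have tB := finite_type_star fHY (star_fg_isum fH hY (homog_fg hH) tY).
have HA : subset H (star (isum H X)).
  by apply: sub_trans (star_ext fHX); apply: isum_subl; apply: submod0; case: hX.
have HB : subset H (star (isum H Y)).
  by apply: sub_trans (star_ext fHY); apply: isum_subl; apply: submod0; case: hY.
case: hH => _ _ _ hh; apply: (hh _ _ pA (star_star_ideal fHX) tA pB (star_star_ideal fHY) tB HA HB).
apply: (comax_sup hX hY (star_frac fHX) (star_frac fHY) (proj1 pA) (proj1 pB)) => //.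
- by apply: sub_trans (star_ext fHX); apply: isum_subr; apply: submod0; case: fH.
- by apply: sub_trans (star_ext fHY); apply: isum_subr; apply: submod0; case: fH.
exact/(comaxP hX hY iX iY).
Qed.

Definition homog_on n (p : nat -> Prop) (H : nat -> K -> Prop) :=
  forall i, (i < n)%N -> p i -> star_homog D star (H i).

Section HomogFamily.
Variables (n : nat) (p : nat -> Prop) (H : nat -> K -> Prop).
Hypothesis hH : homog_on n p H.

Lemma homog_on_sub (q : nat -> Prop) : (forall i, q i -> p i) -> homog_on n q H.
Proof. by move=> qp i hi /qp; apply: hH. Qed.

Lemma frac_iprodn_mask : frac (iprodn D n (mask p H)).
Proof. by apply: frac_iprodn => i hi; apply: frac_mask => /(hH hi)/homog_frac. Qed.

Lemma integral_iprodn_mask : integral D (iprodn D n (mask p H)).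
Proof. by apply: integral_iprodn => i hi; apply: integral_mask => /(hH hi)/homog_integral. Qed.

Lemma star_fg_iprodn_mask : star_fg (iprodn D n (mask p H)).
Proof.
apply: star_fg_iprodn => i hi; split; first by apply: frac_mask => /(hH hi)/homog_frac.
by apply: star_fg_mask => /(hH hi) hHi; split; [exact: homog_frac | exact: homog_fg].
Qed.

Lemma comax_iprodn_mask A : frac A -> integral D A ->
  (forall i, (i < n)%N -> p i -> star_comaximal D star A (H i)) ->
  star_comaximal D star A (iprodn D n (mask p H)).
Proof.
move=> fA iA hc; apply: comax_iprodn => // i hi.
split; first by apply: frac_mask => /(hH hi)/homog_frac.
  by apply: integral_mask => /(hH hi)/homog_integral.
have [pi|pi] := classic (p i).
  exact: comax_eqs fA (homog_frac (hH hi pi)) (eqs_refl _) (eqs_sym (mask_on _ pi)) (hc i hi pi).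
exact: comax_eqs fA frac_D (eqs_refl _) (eqs_sym (mask_off _ pi)) (comax_D fA iA).
Qed.

End HomogFamily.

Section Factorization.
Variables (I : K -> Prop) (n : nat) (F : nat -> K -> Prop).
Hypothesis hF : homog_factorization D star I n F.

Lemma hfac_homog i : (i < n)%N -> star_homog D star (F i).
Proof. by case: hF => h _ _; apply: h. Qed.

Lemma hfac_frac i : (i < n)%N -> frac (F i).
Proof. by move=> hi; apply: homog_frac; apply: hfac_homog. Qed.

Lemma hfac_eq : seteq I (star (iprodn D n F)).
Proof. by case: hF. Qed.

Lemma hfac_comax i j : (i < n)%N -> (j < n)%N -> i <> j -> star_comaximal D star (F i) (F j).
Proof. by case: hF => _ h _; apply: h. Qed.

Lemma hfac_frac_prod : frac (iprodn D n F).
Proof. by apply: frac_iprodn => i hi; exact: hfac_frac. Qed.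

Lemma hfac_sub i : (i < n)%N -> subset I (F i).
Proof.
move=> hi; apply: sub_trans (proj1 hfac_eq) _.
apply: sub_trans (proj1 (homog_star (hfac_homog hi))).
apply: star_mono; [exact: hfac_frac_prod | exact: hfac_frac |].
apply: iprodn_sub => // k hk.
by split; [exact: (homog_submod (hfac_homog hk)) | exact: (homog_integral (hfac_homog hk))].
Qed.

Lemma hfac_index_inj i k : (i < n)%N -> (k < n)%N -> subset (F k) (F i) -> i = k.
Proof.
move=> hi hk FkFi; apply: NNPP => ne.
exact: (homog_not_comax_sub (hfac_homog hi) (hfac_frac hk) FkFi (hfac_comax hi hk ne)).
Qed.

End Factorization.

(* If [F i] is linked to [G j], it is star-comaximal with all the other factors of [G], so
   [G j = G j (F i + Q)^* <= (F i + G j Q)^* <= (F i + I)^* = F i] with [Q] their product. *)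
Lemma linked_factor_sub I n F m G i j :
  homog_factorization D star I n F -> homog_factorization D star I m G ->
  (i < n)%N -> (j < m)%N -> linked (F i) (G j) -> subset (G j) (F i).
Proof.
move=> hF hG hi hj r.
have hFi := hfac_homog hF hi; have hGj := hfac_homog hG hj.
have fFi := homog_frac hFi; have fGj := homog_frac hGj.
have hGo : homog_on m (fun l => l <> j) G by move=> l hl _; exact: (hfac_homog hG hl).
set Q := iprodn D m (mask (fun l => l <> j) G).
have fQ : frac Q := frac_iprodn_mask hGo.
have cFQ : star_comaximal D star (F i) Q.
  apply: (comax_iprodn_mask hGo fFi (homog_integral hFi)) => l hl ne.
  have hGl := hfac_homog hG hl.
  apply: comax_of_not_linked fFi (homog_frac hGl) (homog_integral hFi) (homog_integral hGl) _.
  move=> r2; apply: (linked_trans hFi fGj (homog_frac hGl) (homog_integral hGj)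
    (homog_integral hGl) (homog_fg hGj) (homog_fg hGl) r r2).
  by apply/(comaxP fGj (homog_frac hGl) (homog_integral hGj) (homog_integral hGl));
    apply: (hfac_comax hG hj hl) => e; apply: ne.
have fFQ := frac_isum fFi fQ.
have fGF := frac_iprod fGj fFi; have fGQ := frac_iprod fGj fQ.
move=> x hx.
have x1 : iprod D (G j) (star (isum (F i) Q)) x.
  by rewrite -(mulr1 x); apply: iprod_mul => //; apply: (proj2 cFQ); exact: dom1.
have x2 := proj1 (star_iprod_starr fGj fFQ) _ (star_ext (frac_iprod fGj (star_frac fFQ)) x1).
have x3 : star (isum (iprod D (G j) (F i)) (iprod D (G j) Q)) x.
  by move: x2; apply: star_mono; [exact: frac_iprod | exact: frac_isum | exact: iprod_isumr_sub].
apply: (proj1 (homog_star hFi)); move: x3; apply: star_mono => //; first exact: (frac_isum fGF fGQ).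
apply: isum_lub; [exact: homog_submod | exact: (iprod_sub_r (homog_integral hGj) (homog_submod hFi)) |].
apply: sub_trans (hfac_sub hF hi).
apply: sub_trans (proj2 (hfac_eq hG)).
apply: sub_trans (star_ext (hfac_frac_prod hG)).
by apply: (proj2 (iprodn_factor_out hj _)) => l hl; exact: homog_submod (hfac_homog hG hl).
Qed.

Lemma linked_factor_exists I n F m G i :
  homog_factorization D star I n F -> homog_factorization D star I m G ->
  (i < n)%N -> exists j, (j < m)%N /\ linked (F i) (G j).
Proof.
move=> hF hG hi; apply: NNPP => hn.
have hFi := hfac_homog hF hi.
have hGo : homog_on m (fun _ => True) G by move=> l hl _; exact: (hfac_homog hG hl).
apply: (homog_not_comax_sub hFi (frac_iprodn_mask hGo)).
  apply: sub_trans (hfac_sub hF hi).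
  apply: sub_trans (proj2 (hfac_eq hG)).
  apply: sub_trans (star_ext (hfac_frac_prod hG)).
  exact: (proj2 (iprodn_mask_true m G)).
apply: (comax_iprodn_mask hGo (homog_frac hFi) (homog_integral hFi)) => l hl _.
have hGl := hfac_homog hG hl.
apply: comax_of_not_linked; [exact: homog_frac hFi | exact: homog_frac hGl |
  exact: homog_integral hFi | exact: homog_integral hGl |].
by move=> r; apply: hn; exists l.
Qed.

Lemma factor_matched I n F m G i :
  homog_factorization D star I n F -> homog_factorization D star I m G ->
  (i < n)%N -> exists j, (j < m)%N /\ seteq (F i) (G j).
Proof.
move=> hF hG hi; have [j [hj r]] := linked_factor_exists hF hG hi.
exists j; split => //; split; last exact: linked_factor_sub hF hG hi hj r.
exact: linked_factor_sub hG hF hj hi (linkedC (hfac_frac hF hi) (hfac_frac hG hj) r).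
Qed.

Lemma factor_matching I n F m G :
  homog_factorization D star I n F -> homog_factorization D star I m G ->
  exists sigma : nat -> nat,
    [/\ (forall i, (i < n)%N -> (sigma i < m)%N),
        (forall i j, (i < n)%N -> (j < n)%N -> sigma i = sigma j -> i = j) &
        (forall i, (i < n)%N -> seteq (F i) (G (sigma i)))].
Proof.
move=> hF hG.
have hx i : exists j, (i < n)%N -> (j < m)%N /\ seteq (F i) (G j).
  have [hi|hi] := boolP (i < n)%N; last by exists 0%N.
  by have [j hj] := factor_matched hF hG hi; exists j.
pose sigma i := proj1_sig (constructive_indefinite_description _ (hx i)).
have hsigma i : (i < n)%N -> (sigma i < m)%N /\ seteq (F i) (G (sigma i)).
  by rewrite /sigma; case: constructive_indefinite_description.
exists sigma; split; first by move=> i /hsigma [].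
  move=> i k hi hk e; apply: (hfac_index_inj hF hi hk).
  have [_ [FiG GFi]] := hsigma i hi; have [_ [FkG _]] := hsigma k hk.
  by apply: sub_trans FkG _; rewrite -e.
by move=> i /hsigma [].
Qed.

Lemma injective_leq n m (f : nat -> nat) : (forall i, (i < n)%N -> (f i < m)%N) ->
  (forall i j, (i < n)%N -> (j < n)%N -> f i = f j -> i = j) -> (n <= m)%N.
Proof.
move=> hb hi.
have u : uniq (map f (iota 0 n)).
  by rewrite map_inj_in_uniq ?iota_uniq // => a b; rewrite !mem_iota !add0n; apply: hi.
rewrite -(size_iota 0 n) -(size_map f) -(size_iota 0 m); apply: uniq_leq_size u _.
by move=> y /mapP [x]; rewrite !mem_iota !add0n => hx ->; exact: hb.
Qed.

Lemma homog_factorization_unique I n F m G :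
  homog_factorization D star I n F -> homog_factorization D star I m G ->
  m = n /\
  exists sigma : nat -> nat,
    [/\ (forall i, (i < n)%N -> (sigma i < n)%N),
        (forall i j, (i < n)%N -> (j < n)%N -> sigma i = sigma j -> i = j) &
        (forall i, (i < n)%N -> seteq (F i) (G (sigma i)))].
Proof.
move=> hF hG.
have [sigma [sm sinj sF]] := factor_matching hF hG.
have [tau [tn tinj _]] := factor_matching hG hF.
have e : m = n by apply/eqP; rewrite eqn_leq (injective_leq tn tinj) (injective_leq sm sinj).
by split => //; exists sigma; split => // i hi; rewrite -e; apply: sm.
Qed.

(* With [P, Q] star-comaximal and [(P Q)^* <= I]: [I = I (P + Q)^* <= ((I + P)(I + Q))^*], and
   conversely [(I + P)(I + Q) <= I + P Q <= I]. *)
Lemma star_ideal_split I P Q : star_ideal D star I -> integral D I -> frac P -> frac Q ->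
  integral D P -> integral D Q -> star_comaximal D star P Q ->
  subset (star (iprod D P Q)) I ->
  seteq I (star (iprod D (star (isum I P)) (star (isum I Q)))).
Proof.
move=> [fI eI] iI fP fQ iP iQ c hs.
have fIP := frac_isum fI fP; have fIQ := frac_isum fI fQ.
have fPQ := frac_isum fP fQ.
apply: eqs_trans _ (eqs_sym (star_iprod_star fIP fIQ)); split.
- move=> x hx.
  have x1 : iprod D I (star (isum P Q)) x.
    by rewrite -(mulr1 x); apply: iprod_mul => //; apply: (proj2 c); exact: dom1.
  have x2 := proj1 (star_iprod_starr fI fPQ) _ (star_ext (frac_iprod fI (star_frac fPQ)) x1).
  move: x2; apply: star_mono; [exact: frac_iprod | exact: frac_iprod |].
  by apply: iprod_isum_sub; apply: frac_submod.
- apply: sub_trans (proj1 eI); apply: star_mono; [exact: frac_iprod | exact: fI |].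
  apply: sub_trans (iprod_isum_isum_sub (frac_submod fI) iI iP iQ) _.
  apply: isum_lub; [exact: frac_submod | exact: sub_refl |].
  exact: sub_trans (star_ext (frac_iprod fP fQ)) hs.
Qed.

Section LinkedFamily.
Variables (H0 : K -> Prop) (n : nat) (p : nat -> Prop) (H : nat -> K -> Prop).
Hypotheses (hH0 : star_homog D star H0) (hH : homog_on n p H).

Lemma linked_of_sup_iprodn A : (forall i, (i < n)%N -> p i -> linked H0 (H i)) ->
  proper_integral D A -> star_ideal D star A -> finite_type D star A ->
  subset (iprodn D n (mask p H)) A -> linked H0 A.
Proof.
move=> hl [iA nA] sA tA hPA h1; have fA := proj1 sA.
apply: nA; apply: (comax_sub_unit sA (frac_iprodn_mask hH) hPA).
apply: (comax_iprodn_mask hH fA iA) => i hi pi.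
have hHi := hH hi pi; have fHi := homog_frac hHi.
apply: (comax_of_not_linked fA fHi iA (homog_integral hHi)) => r.
apply: (linked_trans hHi (homog_frac hH0) fA (homog_integral hH0) iA (homog_fg hH0)
  (star_fg_finite_type tA)) h1.
- exact: linkedC (homog_frac hH0) fHi (hl i hi pi).
- exact: linkedC fA fHi r.
Qed.

Lemma star_homog_of_linked A : (forall i, (i < n)%N -> p i -> linked H0 (H i)) ->
  proper_integral D A -> star_ideal D star A -> finite_type D star A ->
  subset (iprodn D n (mask p H)) A -> star_homog D star A.
Proof.
move=> hl pA sA tA hPA; split => // A' B' pA' sA' tA' pB' sB' tB' AA' AB' c.
have rA := linked_of_sup_iprodn hl pA' sA' tA' (sub_trans hPA AA').
have rB := linked_of_sup_iprodn hl pB' sB' tB' (sub_trans hPA AB').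
apply: (linked_trans hH0 (proj1 sA') (proj1 sB') (proj1 pA') (proj1 pB')
  (star_fg_finite_type tA') (star_fg_finite_type tB') rA rB).
exact: (proj2 c _ dom1).
Qed.

Lemma comax_linked_unlinked :
  star_comaximal D star (iprodn D n (mask (fun i => p i /\ linked H0 (H i)) H))
                        (iprodn D n (mask (fun i => p i /\ ~ linked H0 (H i)) H)).
Proof.
have hin : homog_on n (fun i => p i /\ linked H0 (H i)) H by apply: (homog_on_sub hH) => i [].
have hout : homog_on n (fun i => p i /\ ~ linked H0 (H i)) H by apply: (homog_on_sub hH) => i [].
have fout := frac_iprodn_mask hout; have iout := integral_iprodn_mask hout.
apply: (comaxC fout (frac_iprodn_mask hin)).
apply: (comax_iprodn_mask hin fout iout) => i hi [pi ri].
have hHi := hH hi pi; have fHi := homog_frac hHi.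
apply: (comaxC fHi fout).
apply: (comax_iprodn_mask hout fHi (homog_integral hHi)) => j hj [pj rj].
have hHj := hH hj pj.
apply: (comax_of_not_linked fHi (homog_frac hHj) (homog_integral hHi) (homog_integral hHj)) => r.
apply: rj; apply: (linked_trans hHi (homog_frac hH0) (homog_frac hHj) (homog_integral hH0)
  (homog_integral hHj) (homog_fg hH0) (homog_fg hHj) _ r).
exact: linkedC (homog_frac hH0) fHi ri.
Qed.

End LinkedFamily.

Lemma homog_factorization_eqs I J n F :
  seteq I J -> homog_factorization D star J n F -> homog_factorization D star I n F.
Proof. by move=> e [h1 h2 h3]; split => //; exact: eqs_trans e h3. Qed.

Lemma homog_factorization_unit I : star_ideal D star I -> integral D I -> I 1 ->
  homog_factorization D star I 0 (fun _ => D).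
Proof.
move=> [fI _] iI I1; split => //.
exact: eqs_trans (eqs_D_of_1 (frac_submod fI) iI I1) (eqs_sym star_D).
Qed.

Lemma homog_factorization_cons I A B m G :
  star_homog D star A -> homog_factorization D star B m G ->
  (forall j, (j < m)%N -> star_comaximal D star A (G j)) ->
  seteq I (star (iprod D A B)) ->
  homog_factorization D star I m.+1 (fun i => if (i < m)%N then G i else A).
Proof.
move=> hA hG cAG eI; set G' := fun i => _.
have fA := homog_frac hA; have fGm := hfac_frac_prod hG.
have fB : frac B := frac_eqs (star_frac fGm) (eqs_sym (hfac_eq hG)).
have e1 : seteq (iprodn D m G') (iprodn D m G).
  by apply: iprodn_eqs => i hi; rewrite /G' hi; exact: eqs_refl.
have fG'm : frac (iprodn D m G') := frac_eqs fGm (eqs_sym e1).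
split.
- move=> i hi; rewrite /G'; case: ifP => h; last exact: hA.
  exact: (hfac_homog hG h).
- move=> i j hi hj ne; rewrite /G'.
  case: ifP => hi'; case: ifP => hj'.
  + exact: (hfac_comax hG hi' hj' ne).
  + exact: (comaxC fA (hfac_frac hG hi') (cAG i hi')).
  + exact: cAG.
  + have ei : i = m by apply/eqP; rewrite eqn_leq -ltnS hi leqNgt hi'.
    have ej : j = m by apply/eqP; rewrite eqn_leq -ltnS hj leqNgt hj'.
    by case: ne; rewrite ei ej.
- rewrite /= {2}/G' ltnn.
  apply: eqs_trans eI _.
  apply: eqs_trans (star_eqs (frac_iprod fA fB) (iprodC _ _)) _.
  apply: (star_iprod_congr fB fA fG'm fA _ (eqs_refl _)).
  apply: eqs_trans (star_eqs fB (hfac_eq hG)) _.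
  exact: eqs_trans (star_idem fGm) (star_eqs fGm (eqs_sym e1)).
Qed.

Lemma homog_factorization_inactive n p H I : (forall i, (i < n)%N -> ~ p i) ->
  star_ideal D star I -> integral D I -> subset (star (iprodn D n (mask p H))) I ->
  exists m G, homog_factorization D star I m G.
Proof.
move=> hn sI iI hs; exists 0%N, (fun _ => D); apply: homog_factorization_unit => //.
have e : seteq (iprodn D n (mask p H)) D.
  by apply: iprodn_trivial => i hi; apply: mask_off; apply: hn.
apply: hs; apply: (proj2 (star_eqs (frac_eqs frac_D (eqs_sym e)) e)).
exact: (proj2 star_D _ dom1).
Qed.

Lemma star_ideal_split_linked H0 n p H I : star_homog D star H0 -> homog_on n p H ->
  star_ideal D star I -> integral D I -> subset (star (iprodn D n (mask p H))) I ->
  seteq I (star (iprod D (star (isum I (iprodn D n (mask (fun i => p i /\ linked H0 (H i)) H))))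
                         (star (isum I (iprodn D n (mask (fun i => p i /\ ~ linked H0 (H i)) H)))))).
Proof.
move=> hH0 hH sI iI hsub.
have hin : homog_on n (fun i => p i /\ linked H0 (H i)) H by apply: (homog_on_sub hH) => i [].
have hout : homog_on n (fun i => p i /\ ~ linked H0 (H i)) H by apply: (homog_on_sub hH) => i [].
apply: (star_ideal_split sI iI (frac_iprodn_mask hin) (frac_iprodn_mask hout)
  (integral_iprodn_mask hin) (integral_iprodn_mask hout) (comax_linked_unlinked hH0 hH)).
apply: sub_trans hsub; apply: (proj2 (star_eqs (frac_iprodn_mask hH) _)).
apply: iprodn_mask_split.
- by move=> i hi pi; exact: (homog_submod (hH i hi pi)).
- move=> i; split => [pi|[[]|[]] //].
  by have [r|r] := classic (linked H0 (H i)); [left | right].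
- by move=> i [[_ r1] [_ r2]].
Qed.

(* The factors linked to [H0] are absorbed in the star-homog ideal [A = (I + Pin)^*]; the
   remaining ones only matter through [B = (I + Pout)^*], and [I = (A B)^*]. *)
Lemma homog_factorization_split H0 n p H I :
  star_homog D star H0 -> homog_on n p H ->
  star_ideal D star I -> integral D I -> star_fg I ->
  subset (star (iprodn D n (mask p H))) I ->
  (exists m G, homog_factorization D star
     (star (isum I (iprodn D n (mask (fun i => p i /\ ~ linked H0 (H i)) H)))) m G) ->
  exists m G, homog_factorization D star I m G.
Proof.
move=> hH0 hH sI iI tI hsub [m [G hG]].
set pin := fun i => p i /\ linked H0 (H i).
set pout := fun i => p i /\ ~ linked H0 (H i).
have hin : homog_on n pin H by apply: (homog_on_sub hH) => i [].
have hout : homog_on n pout H by apply: (homog_on_sub hH) => i [].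
set Pin := iprodn D n (mask pin H); set Pout := iprodn D n (mask pout H).
have fI := proj1 sI.
have fPin : frac Pin := frac_iprodn_mask hin.
have fPout : frac Pout := frac_iprodn_mask hout.
have iPin : integral D Pin := integral_iprodn_mask hin.
have fIin := frac_isum fI fPin; have fIout := frac_isum fI fPout.
set A := star (isum I Pin); set B := star (isum I Pout).
have fA : frac A := star_frac fIin; have fB : frac B := star_frac fIout.
have iA : integral D A by apply: star_integral => //; exact: integral_isum.
have eIAB : seteq I (star (iprod D A B)) := star_ideal_split_linked hH0 hH sI iI hsub.
have [A1|nA1] := classic (A 1).
  exists m, G; apply: homog_factorization_eqs hG.
  have eA : seteq A D := eqs_D_of_1 (star_submod fIin) iA A1.
  apply: eqs_trans eIAB _.
  apply: eqs_trans (star_eqs (frac_iprod fA fB) (iprod_eqs eA (eqs_refl _))) _.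
  apply: eqs_trans (star_eqs (frac_iprod frac_D fB) (iprod_unitl (frac_submod fB))) _.
  exact: star_idem.
have PinA : subset Pin A.
  by apply: sub_trans (star_ext fIin); apply: isum_subr; exact: (submod0 (frac_submod fI)).
have PoutB : subset Pout B.
  by apply: sub_trans (star_ext fIout); apply: isum_subr; exact: (submod0 (frac_submod fI)).
have hA : star_homog D star A.
  apply: (star_homog_of_linked hH0 hin (fun i _ h => proj2 h) (conj iA nA1)
    (star_star_ideal fIin) _ PinA).
  exact: (finite_type_star fIin (star_fg_isum fI fPin tI (star_fg_iprodn_mask hin))).
exists m.+1, (fun i => if (i < m)%N then G i else A).
apply: (homog_factorization_cons hA hG _ eIAB) => j hj.
have hGj := hfac_homog hG hj.
apply: (comax_sup fPin fPout fA (homog_frac hGj) iA (homog_integral hGj) PinA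
  (sub_trans PoutB (hfac_sub hG hj))).
exact: comax_linked_unlinked.
Qed.

(* [s] bounds the indices of the active factors; the induction is on its size. *)
Lemma homog_factorization_of_sup (s : seq nat) n p H I :
  homog_on n p H -> (forall i, (i < n)%N -> p i -> i \in s) ->
  star_ideal D star I -> integral D I -> star_fg I ->
  subset (star (iprodn D n (mask p H))) I ->
  exists m G, homog_factorization D star I m G.
Proof.
move: {2}(size s) (leqnn (size s)) => N.
elim: N s p I => [|N IH] s p I hs hH hps sI iI tI hsub.
  apply: (homog_factorization_inactive _ sI iI hsub) => i hi pi.
  by move: hs (hps i hi pi); rewrite leqn0 => /nilP ->.
have [[k [hk pk]]|none] := classic (exists k, (k < n)%N /\ p k); last first.
  by apply: (homog_factorization_inactive _ sI iI hsub) => i hi pi; apply: none; exists i.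
have hHk := hH k hk pk.
apply: (homog_factorization_split hHk hH sI iI tI hsub).
pose pout i := p i /\ ~ linked (H k) (H i).
have hout : homog_on n pout H by apply: (homog_on_sub hH) => i [].
have fI := proj1 sI; have fPout := frac_iprodn_mask hout.
have fIout := frac_isum fI fPout.
apply: (IH (rem k s) pout _ _ hout _ (star_star_ideal fIout)).
- by rewrite size_rem ?(hps k hk pk) //; case: (size s) hs.
- move=> i hi [pi nr]; apply: (rem_mem _ (hps i hi pi)); apply/eqP => e.
  by apply: nr; rewrite -e; exact: (linked_refl (hH i hi pi)).
- exact: (star_integral fIout (integral_isum iI (integral_iprodn_mask hout))).
- exact: (star_fg_star fIout (star_fg_isum fI fPout tI (star_fg_iprodn_mask hout))).
- apply: (star_mono fPout fIout); apply: isum_subr.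
  exact: (submod0 (frac_submod fI)).
Qed.

Lemma frac_inv I : frac I -> integral D I -> frac (Defs.inv D I).
Proof.
move=> fI iI; split.
- split.
  + by move=> y hy; rewrite mul0r; exact: dom0.
  + by move=> a b ha hb y hy; rewrite mulrDl; apply: domD; auto.
  + by move=> d a hd ha y hy; rewrite -mulrA; apply: domM; auto.
- exists 1; split; last exact: oner_neq0.
  by move=> y hy; rewrite mul1r; apply: iI.
- case: fI => _ [c [hc hc0]] _; exists c; split => //; first by apply: iI.
  by move=> x hx; rewrite mulrC; apply: hx.
Qed.

Lemma gen_sub_mem (u u' : seq K) : (forall a, a \in u -> a \in u') -> subset (gen D u) (gen D u').
Proof. by move=> h; apply: gen_lub; [exact: submod_gen | move=> a /h; exact: gen_in]. Qed.

Lemma iprod_gen_support I V z : iprod D I V z ->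
  exists u : seq K, (forall a, a \in u -> I a) /\ iprod D (gen D u) V z.
Proof.
move: z; apply: iprod_lub; last first.
  move=> a b ha hb; exists [:: a]; split; first by move=> c; rewrite inE => /eqP ->.
  by apply: iprod_mul => //; apply: gen_in; rewrite inE.
split.
- by exists [::]; split => //; apply: submod0; apply: submod_iprod.
- move=> a b [u1 [h1 k1]] [u2 [h2 k2]]; exists (u1 ++ u2); split.
    by move=> c; rewrite mem_cat => /orP []; auto.
  apply: (@submodD (iprod D (gen D (u1 ++ u2)) V)); first exact: submod_iprod.
  + move: k1; apply: iprod_mono; last exact: sub_refl.
    by apply: gen_sub_mem => c hc; rewrite mem_cat hc.
  + move: k2; apply: iprod_mono; last exact: sub_refl.
    by apply: gen_sub_mem => c hc; rewrite mem_cat hc orbT.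
- move=> d a hd [u [h k]]; exists u; split => //.
  by apply: (@submodM (iprod D (gen D u) V)) => //; exact: submod_iprod.
Qed.

Lemma iprod_gen_support_seq I V (t : seq K) : (forall a, a \in t -> iprod D I V a) ->
  exists u : seq K, (forall a, a \in u -> I a) /\ (forall a, a \in t -> iprod D (gen D u) V a).
Proof.
elim: t => [|a t IH] h; first by exists [::].
have [u1 [h1 k1]] := iprod_gen_support (h a (mem_head a t)).
have [u2 [h2 k2]] : exists u, (forall a, a \in u -> I a) /\
    (forall a, a \in t -> iprod D (gen D u) V a).
  by apply: IH => b hb; apply: h; rewrite inE hb orbT.
exists (u1 ++ u2); split; first by move=> c; rewrite mem_cat => /orP []; auto.
move=> b; rewrite inE => /orP [/eqP -> | hb].
  move: k1; apply: iprod_mono; last exact: sub_refl.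
  by apply: gen_sub_mem => c hc; rewrite mem_cat hc.
move: (k2 b hb); apply: iprod_mono; last exact: sub_refl.
by apply: gen_sub_mem => c hc; rewrite mem_cat hc orbT.
Qed.

(* [I = I (G V)^* <= (G (I V))^* = G^*] *)
Lemma sub_star_of_star_unit I G V : frac I -> frac G -> frac V ->
  seteq (star (iprod D G V)) D -> seteq (star (iprod D I V)) D -> subset I (star G).
Proof.
move=> fI fG fV eGV eIV x hx.
have fGV := frac_iprod fG fV; have fIV := frac_iprod fI fV.
have x1 : iprod D I (star (iprod D G V)) x.
  by rewrite -(mulr1 x); apply: iprod_mul => //; apply: (proj2 eGV); exact: dom1.
have x2 := proj1 (star_iprod_starr fI fGV) _ (star_ext (frac_iprod fI (star_frac fGV)) x1).
have eIGV : seteq (iprod D I (iprod D G V)) (iprod D G (iprod D I V)).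
  apply: eqs_trans (eqs_sym (iprodA _ _ _)) _.
  apply: eqs_trans (iprod_eqs (iprodC _ _) (eqs_refl _)) _.
  exact: iprodA.
have x3 := proj2 (star_iprod_starr fG fIV) _ (proj1 (star_eqs (frac_iprod fI fGV) eIGV) _ x2).
have x4 := proj1 (star_eqs (frac_iprod fG (star_frac fIV)) (iprod_eqs (eqs_refl G) eIV)) _ x3.
exact: (proj1 (star_eqs (frac_iprod fG frac_D) (iprod_unitr (frac_submod fG))) _ x4).
Qed.

(* By finite character, [1] already lies in [(J V)^*] for a finitely generated [J <= I]. *)
Lemma star_invertible_fg (hfc : finite_character D star) I :
  star_ideal D star I -> integral D I -> star_invertible D star I -> star_fg I.
Proof.
move=> [fI eI] iI hinv; set V := Defs.inv D I.
have fV := frac_inv fI iI; have fIV := frac_iprod fI fV.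
have [J [fJ [t et] sJ J1]] := proj1 (hfc _ fIV) 1 (proj2 hinv _ dom1).
have [u [uI ut]] := iprod_gen_support_seq (fun a ha => sJ a (proj2 et a (gen_in ha))).
have [c [Ic c0]] : exists c, I c /\ c != 0 by case: fI.
set G := gen D (c :: u).
have fG : frac G := frac_gen (mem_head c u) c0.
have GI : subset G I.
  by apply: gen_lub; [exact: frac_submod | move=> a; rewrite inE => /orP [/eqP -> | /uI]].
have fGV := frac_iprod fG fV.
have JGV : subset J (iprod D G V).
  apply: sub_trans (proj1 et) _; apply: gen_lub; first exact: submod_iprod.
  move=> a ha; move: (ut a ha); apply: iprod_mono; last exact: sub_refl.
  by apply: gen_sub_mem => b hb; rewrite inE hb orbT.
have GV1 : star (iprod D G V) 1 := star_mono fJ fGV JGV J1.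
have iGV : integral D (star (iprod D G V)).
  apply: sub_trans (proj1 hinv); apply: star_mono => //.
  by apply: iprod_mono => //; exact: sub_refl.
have eGV := eqs_D_of_1 (star_submod fGV) iGV GV1.
exists (c :: u); split => //; apply: (eqs_trans eI); split.
- exact: (sub_star_of_star_unit fI fG fV eGV hinv).
- exact: sub_trans (star_mono fG fI GI) (proj1 eI).
Qed.

Lemma homog_factorization_exists (hfc : finite_character D star) (hSH : star_SH D star) I :
  star_ideal D star I -> proper_integral D I -> star_invertible D star I ->
  exists n F, homog_factorization D star I n F.
Proof.
move=> sI [iI nI] hinv; have fI := proj1 sI.
have [x [Ix x0]] : exists x, I x /\ x != 0 by case: fI.
have nu : ~ D x^-1.
  by move=> h; apply: nI; rewrite -(mulVf x0); exact: (submodM (frac_submod fI) h Ix).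
have [n [F [hF ex]]] := hSH x (iI x Ix) x0 nu.
have hH : homog_on n (fun _ => True) F by move=> i hi _; exact: hF.
apply: (homog_factorization_of_sup (s := iota 0 n) hH) => //.
- by move=> i hi _; rewrite mem_iota.
- exact: star_invertible_fg.
- apply: sub_trans (proj1 (star_eqs (frac_iprodn_mask hH) (eqs_sym (iprodn_mask_true n F)))) _.
  apply: sub_trans (proj2 ex) _.
  by move=> y [d [hd ->]]; exact: (submodM (frac_submod fI) hd Ix).
Qed.

End StarSH.

Theorem mainTheorem16 (K : fieldType) (D : K -> Prop)
    (star : (K -> Prop) -> (K -> Prop))
    (hD : is_domain_with_qf D) (hstar : is_star_op D star)
    (hfc : finite_character D star) (hSH : star_SH D star)
    (I : K -> Prop) (hI : star_ideal D star I) (hIp : proper_integral D I)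
    (hIinv : star_invertible D star I) :
  exists (n : nat) (F : nat -> K -> Prop),
    homog_factorization D star I n F /\
    forall (m : nat) (G : nat -> K -> Prop),
      homog_factorization D star I m G ->
      m = n /\
      exists sigma : nat -> nat,
        [/\ (forall i, (i < n)%N -> (sigma i < n)%N),
            (forall i j, (i < n)%N -> (j < n)%N -> sigma i = sigma j -> i = j) &
            (forall i, (i < n)%N -> seteq (F i) (G (sigma i)))].
Proof.
have [n [F hF]] := homog_factorization_exists hD hstar hfc hSH hI hIp hIinv.
exists n, F; split => // m G hG.
exact: homog_factorization_unique hF hG.
Qed.
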